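(* Let $c\ge 5$ and $g\ge 2$. The free-nilpotent complex Lie algebra $N(c,g)$ does not admit a periodic prederivation.
   Context: $N(c,g)$ denotes the free-nilpotent complex Lie algebra of nilpotency class $c$ on $g$ generators. A linear map $P:\mathfrak{g}\to\mathfrak{g}$ is a prederivation if $P([x,[y,z]])=[P(x),[y,z]]+[x,[P(y),z]]+[x,[y,P(z)]]$ for all $x,y,z\in\mathfrak{g}$; it is periodic if $P^m=\mathrm{id}$ for some integer $m\ge 1$. *)

From HB Require Import structures.
From mathcomp Require Import all_boot all_algebra.
From mathcomp Require Import complex.
From mathcomp Require Import Rstruct.
Unset Printing Implicit Defensive.
Import GRing.Theory.
Local Open Scope ring_scope.

Definition CC : numClosedFieldType := (Rdefinitions.R)[i].

Record lieAlgebra (F : fieldType) := LieAlgebra {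
  lie_space :> lmodType F;
  lie_bracket : lie_space -> lie_space -> lie_space;
  lie_linear_l : forall z, linear (fun x => lie_bracket x z);
  lie_linear_r : forall x, linear (lie_bracket x);
  lie_alt : forall x, lie_bracket x x = 0;
  lie_jacobi : forall x y z,
    lie_bracket x (lie_bracket y z) + lie_bracket y (lie_bracket z x)
      + lie_bracket z (lie_bracket x y) = 0
}.

Arguments lie_bracket {F} L : rename.

Fixpoint rbracket (F : fieldType) (L : lieAlgebra F) (n : nat)
    (x : nat -> L) {struct n} : L :=
  match n with
  | 0%N => x 0%N
  | n'.+1 => lie_bracket L (x 0%N) (@rbracket F L n' (fun i => x i.+1))
  end.
Arguments rbracket {F} L n x.

(* L is nilpotent of class at most c: the (c+1)-st term of the lower central
   series vanishes, i.e. all right-normed brackets of c+1 elements vanish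
   (these span gamma_{c+1}(L)). *)
Definition nilpotent_class_le {F : fieldType} (c : nat) (L : lieAlgebra F) :=
  forall x : nat -> L, rbracket L c x = 0.

Definition lie_hom {F : fieldType} {L M : lieAlgebra F} (f : L -> M) :=
  linear f /\ forall x y, f (lie_bracket L x y) = lie_bracket M (f x) (f y).

Definition is_free_nilpotent {F : fieldType} (c g : nat) (L : lieAlgebra F)
    (x : 'I_g -> L) :=
  nilpotent_class_le c L /\
  forall (M : lieAlgebra F) (y : 'I_g -> M), nilpotent_class_le c M ->
    exists f : L -> M,
      [/\ lie_hom f, (forall i, f (x i) = y i) &
          forall f' : L -> M, lie_hom f' -> (forall i, f' (x i) = y i) ->
            forall v, f' v = f v].

Definition prederivation {F : fieldType} {L : lieAlgebra F} (P : L -> L) :=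
  linear P /\
  forall x y z,
    P (lie_bracket L x (lie_bracket L y z)) =
      lie_bracket L (P x) (lie_bracket L y z)
      + lie_bracket L x (lie_bracket L (P y) z)
      + lie_bracket L x (lie_bracket L y (P z)).

Definition periodic {T : Type} (P : T -> T) :=
  exists m : nat, (0 < m)%N /\ forall v, iter m P v = v.

From HB Require Import structures.
From mathcomp Require Import all_boot all_algebra.
From mathcomp Require Import cyclic separable cyclotomic ring.
Set Implicit Arguments.
Unset Strict Implicit.

Import GRing.Theory Num.Theory.
Local Open Scope ring_scope.

(* A periodic linear map of a complex vector space is diagonalizable with
   roots of unity as eigenvalues.  If P is a prederivation and u, v are
   eigenvectors for z, e, then (ad u)^2 v and (ad u)^4 v are eigenvectors for
   2z + e and 4z + e; as no four complex numbers z, e, 2z + e, 4z + e all have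
   modulus 1, (ad u)^4 v = 0.  But N(c,g) maps onto the 6-dimensional filiform
   algebra when c >= 5 and g >= 2, and since eigenvectors span one can choose
   u and v whose images there have (ad u)^4 v <> 0. *)

Section LinearFun.
Variables (F : fieldType) (U W : lmodType F) (f : U -> W).
Hypothesis f_linear : linear f.

Let fL : {linear U -> W} := HB.pack f (GRing.isLinear.Build F U W *:%R f f_linear).

Lemma linear_fun0 : f 0 = 0. Proof. exact: (linear0 fL). Qed.
Lemma linear_funZ k u : f (k *: u) = k *: f u. Proof. exact: (linearZ_LR fL). Qed.
Lemma linear_fun_sum (I : Type) (r : seq I) (P : pred I) (G : I -> U) :
  f (\sum_(i <- r | P i) G i) = \sum_(i <- r | P i) f (G i).
Proof. exact: (linear_sum fL). Qed.

Lemma linear_comp_fun (X : lmodType F) (h : W -> X) :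
  linear h -> linear (fun u => h (f u)).
Proof. by move=> h_linear k u v; rewrite f_linear h_linear. Qed.
End LinearFun.

Section PeriodicEigen.
Variables (F : fieldType) (V : lmodType F) (P : V -> V) (n : nat).
Hypotheses (P_linear : linear P) (P_period : forall v, iter n.+1 P v = v).

Definition eigen_component (lam : F) (v : V) :=
  \sum_(j < n.+1) lam ^+ (n.+1 - j) *: iter j P v.

Lemma eigen_componentP lam v :
  lam ^+ n.+1 = 1 -> P (eigen_component lam v) = lam *: eigen_component lam v.
Proof.
move=> lam_unity; rewrite (linear_fun_sum P_linear) big_ord_recr /= scaler_sumr.
rewrite big_ord_recl /= subn0 scalerA -exprS exprS lam_unity mulr1.
rewrite (linear_funZ P_linear) subSnn expr1 -iterS P_period addrC.
congr (_ + _); apply: eq_bigr => j _.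
rewrite (linear_funZ P_linear) scalerA -exprS /bump /= add1n subSS subSn //.
exact: ltnW (ltn_ord j).
Qed.

Lemma sum_eigen_component w v : n.+1.-primitive_root w ->
  \sum_(k < n.+1) eigen_component (w ^+ k) v = n.+1%:R *: v.
Proof.
move=> w_prim; rewrite /eigen_component exchange_big /= big_ord_recl /= subn0.
rewrite -scaler_suml.
have -> : \sum_(k < n.+1) (w ^+ k) ^+ n.+1 = n.+1%:R.
  under eq_bigr => k _ do rewrite exprAC (prim_expr_order w_prim) expr1n.
  by rewrite sumr_const card_ord.
rewrite big1 ?addr0 // => j _; rewrite -scaler_suml.
under eq_bigr => k _ do rewrite exprAC.
have w_pow_unity : (w ^+ (n.+1 - bump 0 j)) ^+ n.+1 = 1.
  by rewrite exprAC (prim_expr_order w_prim) expr1n.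
have w_pow_neq1 : w ^+ (n.+1 - bump 0 j) != 1.
  rewrite -(prim_order_dvd w_prim) /bump /= add1n subSS.
  apply/negP => /dvdn_leq; rewrite subn_gt0 ltn_ord => /(_ isT).
  by rewrite ltnNge leq_subr.
suff -> : \sum_(k < n.+1) (w ^+ (n.+1 - bump 0 j)) ^+ k = 0 by rewrite scale0r.
move: w_pow_unity w_pow_neq1; set x := w ^+ _ => x_unity x_neq1.
have := subrX1 x n.+1; rewrite x_unity subrr => /esym/eqP.
by rewrite mulf_eq0 subr_eq0 (negbTE x_neq1) => /eqP.
Qed.

End PeriodicEigen.

Lemma closed_field_prim_root (C : closedFieldType) (n : nat) :
  (0 < n)%N -> n%:R != 0 :> C -> exists z : C, n.-primitive_root z.
Proof.
move=> n_gt0 n_neq0; pose p : {poly C} := 'X^n - 1.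
have [r Dp] := closed_field_poly_normal p.
rewrite (monicP _) ?monicXnsubC // scale1r in Dp.
have r_unity : all n.-unity_root r.
  by apply/allP=> z; rewrite -root_prod_XsubC -Dp.
have size_r : (n < (size r).+1)%N.
  by rewrite -(size_prod_XsubC r id) -Dp size_XnsubC.
have [|z] := hasP (has_prim_root n_gt0 r_unity _ size_r); last by exists z.
by rewrite -separable_prod_XsubC -Dp separable_Xn_sub_1.
Qed.

Lemma periodic_eigenvector_outside_ker (C : numClosedFieldType) (V : lmodType C)
    (P : V -> V) (phi : V -> C^o) (v : V) :
  linear P -> periodic P -> linear phi -> phi v != 0 ->
  exists u lam, P u = lam *: u /\ phi u != 0.
Proof.
move=> P_linear [[|n] [//= _ P_period]] phi_linear phi_v.
have [w w_prim] : exists w : C, n.+1.-primitive_root w.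
  by apply: closed_field_prim_root; rewrite ?pnatr_eq0.
have [k phi_avg] : exists k : 'I_n.+1, phi (eigen_component P n (w ^+ k) v) != 0.
  apply/existsP; apply: contraNT phi_v; rewrite negb_exists => /forallP phi_avg0.
  have := congr1 phi (sum_eigen_component P v w_prim).
  rewrite (linear_fun_sum phi_linear) big1 => [|k _]; last exact/eqP/negPn/phi_avg0.
  rewrite (linear_funZ phi_linear) => /esym/eqP.
  by rewrite scaler_eq0 pnatr_eq0.
exists (eigen_component P n (w ^+ k) v), (w ^+ k); split=> //.
by rewrite (eigen_componentP P_linear P_period) // exprAC (prim_expr_order w_prim) expr1n.
Qed.

Lemma eigenvalue_unity_of_iter (F : fieldType) (V : lmodType F) (P : V -> V)
    (m : nat) (u : V) (lam : F) :
  linear P -> P u = lam *: u -> u != 0 -> iter m P u = u -> lam ^+ m = 1.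
Proof.
move=> P_linear Pu u_neq0.
have iterP k : iter k P u = lam ^+ k *: u.
  elim: k => [|k IHk]; first by rewrite scale1r.
  by rewrite iterS IHk (linear_funZ P_linear) Pu scalerA exprSr.
rewrite iterP => /eqP; rewrite -subr_eq0 -{2}[u]scale1r -scalerBl.
by rewrite scaler_eq0 (negbTE u_neq0) orbF subr_eq0 => /eqP.
Qed.

Lemma norm_unity_root (R : numDomainType) (x : R) (m : nat) :
  (0 < m)%N -> x ^+ m = 1 -> `|x| = 1.
Proof.
by move=> m_gt0 x_unity; apply/eqP; rewrite -(pexpr_eq1 m_gt0) // -normrX x_unity normr1.
Qed.

(* Expanding the squared norms, |4z + e|^2 - 2|2z + e|^2 + |e|^2 = 8|z|^2. *)
Lemma unit_norm_progression_false (C : numClosedFieldType) (z e : C) :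
  `|z| = 1 -> `|e| = 1 -> `|z *+ 2 + e| = 1 -> `|z *+ 4 + e| = 1 -> False.
Proof.
have sq_norm1 (x : C) : `|x| = 1 -> x * x^* = 1 by move=> x1; rewrite -normCK x1 expr1n.
move=> /sq_norm1 z1 /sq_norm1 e1 /sq_norm1 ze2 /sq_norm1 ze4.
rewrite rmorphD rmorphMn in ze2; rewrite rmorphD rmorphMn in ze4.
suff : (8 : C) = 0 by move/eqP; rewrite pnatr_eq0.
have -> : (8 : C) = - 8 * (z * z^* - 1) + (e * e^* - 1)
    - 2 * ((z *+ 2 + e) * (z^* *+ 2 + e^*) - 1)
    + ((z *+ 4 + e) * (z^* *+ 4 + e^*) - 1) by ring.
by rewrite z1 e1 ze2 ze4 !subrr !mulr0 !addr0 subrr.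
Qed.

Section LieBracket.
Variables (F : fieldType) (L : lieAlgebra F).

Lemma lie_bracketZl k u v : lie_bracket L (k *: u) v = k *: lie_bracket L u v.
Proof. exact: (linear_funZ (@lie_linear_l _ L v)). Qed.

Lemma lie_bracketZr k u v : lie_bracket L u (k *: v) = k *: lie_bracket L u v.
Proof. exact: (linear_funZ (@lie_linear_r _ L u)). Qed.

Lemma lie_bracket0l v : lie_bracket L 0 v = 0.
Proof. exact: (linear_fun0 (@lie_linear_l _ L v)). Qed.

Lemma lie_bracket0r u : lie_bracket L u 0 = 0.
Proof. exact: (linear_fun0 (@lie_linear_r _ L u)). Qed.

Lemma prederivation_eigen_bracket (P : L -> L) (u v w : L) (a b c : F) :
  prederivation P -> P u = a *: u -> P v = b *: v -> P w = c *: w ->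
  P (lie_bracket L u (lie_bracket L v w)) =
    (a + b + c) *: lie_bracket L u (lie_bracket L v w).
Proof.
move=> [_ P_bracket] Pu Pv Pw.
by rewrite P_bracket Pu Pv Pw !lie_bracketZl !lie_bracketZr !scalerDl.
Qed.

End LieBracket.

Lemma periodic_prederivation_eigen_ad4_eq0 (C : numClosedFieldType) (L : lieAlgebra C)
    (P : L -> L) (u v : L) (z e : C) :
  prederivation P -> periodic P -> P u = z *: u -> P v = e *: v ->
  iter 4 (lie_bracket L u) v = 0.
Proof.
move=> P_pre [m [m_gt0 P_period]] Pu Pv.
rewrite -[iter 4 _ v]/(iter 2 _ (iter 2 _ v)); set w2 := iter 2 _ v; set w4 := iter 2 _ w2.
apply/eqP/contraT => w4_neq0.
have norm1 (w : L) lam : w != 0 -> P w = lam *: w -> `|lam| = 1.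
  move=> w_neq0 Pw; apply: (norm_unity_root m_gt0).
  exact: eigenvalue_unity_of_iter P_pre.1 Pw w_neq0 (P_period w).
have Pw2 : P w2 = (z *+ 2 + e) *: w2.
  by rewrite [LHS](prederivation_eigen_bracket P_pre Pu Pu Pv) -mulr2n.
have Pw4 : P w4 = (z *+ 4 + e) *: w4.
  rewrite [LHS](prederivation_eigen_bracket P_pre Pu Pu Pw2).
  by rewrite -mulr2n addrA -mulrnDr.
have w2_neq0 : w2 != 0.
  by apply: contraNneq w4_neq0 => w2_eq0; rewrite /w4 w2_eq0 /= !lie_bracket0r.
have u_neq0 : u != 0.
  by apply: contraNneq w4_neq0 => u_eq0; rewrite /w4 u_eq0 /= lie_bracket0l.
have v_neq0 : v != 0.
  by apply: contraNneq w2_neq0 => v_eq0; rewrite /w2 v_eq0 /= !lie_bracket0r.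
case: (unit_norm_progression_false (norm1 _ _ u_neq0 Pu) (norm1 _ _ v_neq0 Pv)
  (norm1 _ _ w2_neq0 Pw2) (norm1 _ _ w4_neq0 Pw4)).
Qed.

Section FiliformModel.
Variable F : fieldType.

Definition fil6 : lmodType F := (F^o * F^o * F^o * F^o * F^o * F^o)%type.

(* With e_i the standard basis, [e_0, e_i] = e_(i+1) for 1 <= i <= 4,
   and all other brackets of basis vectors vanish. *)
Definition fil6_bracket (a b : fil6) : fil6 :=
  let: (a0, a1, a2, a3, a4, _) := a in
  let: (b0, b1, b2, b3, b4, _) := b in
  (0, 0, a0 * b1 - b0 * a1, a0 * b2 - b0 * a2, a0 * b3 - b0 * a3,
   a0 * b4 - b0 * a4).

Lemma fil6_zeroE : (0 : fil6) = (0, 0, 0, 0, 0, 0).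
Proof. by []. Qed.

Lemma fil6_addE a0 a1 a2 a3 a4 a5 b0 b1 b2 b3 b4 b5 :
  (a0, a1, a2, a3, a4, a5) + (b0, b1, b2, b3, b4, b5) =
  (a0 + b0, a1 + b1, a2 + b2, a3 + b3, a4 + b4, a5 + b5) :> fil6.
Proof. by []. Qed.

Lemma fil6_scaleE k a0 a1 a2 a3 a4 a5 :
  k *: (a0, a1, a2, a3, a4, a5) =
  (k * a0, k * a1, k * a2, k * a3, k * a4, k * a5) :> fil6.
Proof. by []. Qed.

Lemma scale_regularE (k : F) (a : F^o) : k *: a = k * a.
Proof. by []. Qed.

Ltac fil6_case a := case: a => [[[[[? ?] ?] ?] ?] ?].
Ltac fil6_ring := rewrite /= ?fil6_scaleE ?fil6_addE ?fil6_zeroE;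
  congr (_, _, _, _, _, _); rewrite /= ?scale_regularE; ring.

Lemma fil6_bracket_linear_l b : linear (fun a => fil6_bracket a b).
Proof. by fil6_case b => k a a'; fil6_case a; fil6_case a'; fil6_ring. Qed.

Lemma fil6_bracket_linear_r a : linear (fil6_bracket a).
Proof. by fil6_case a => k b b'; fil6_case b; fil6_case b'; fil6_ring. Qed.

Lemma fil6_bracket_alt a : fil6_bracket a a = 0.
Proof. by fil6_case a; fil6_ring. Qed.

Lemma fil6_bracket_jacobi a b c :
  fil6_bracket a (fil6_bracket b c) + fil6_bracket b (fil6_bracket c a)
    + fil6_bracket c (fil6_bracket a b) = 0.
Proof. by fil6_case a; fil6_case b; fil6_case c; fil6_ring. Qed.

Definition filiform6 : lieAlgebra F := @LieAlgebra F fil6 fil6_bracket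
  fil6_bracket_linear_l fil6_bracket_linear_r fil6_bracket_alt fil6_bracket_jacobi.

Definition fil6_coord (a : fil6) (i : nat) : F :=
  let: (a0, a1, a2, a3, a4, a5) := a in
  nth 0 [:: a0; a1; a2; a3; a4; a5] i.

Lemma fil6_coord_linear i : linear (fun a : fil6 => fil6_coord a i : F^o).
Proof.
move=> k a b; fil6_case a; fil6_case b.
by case: i => [|[|[|[|[|[|i]]]]]] //=; rewrite nth_nil scaler0 addr0.
Qed.

Lemma fil6_coord_bracket_low a b i : (i < 2)%N -> fil6_coord (fil6_bracket a b) i = 0.
Proof. by fil6_case a; fil6_case b; case: i => [|[|]]. Qed.

Lemma fil6_coord_bracket a b i : (i < 4)%N ->
  fil6_coord (fil6_bracket a b) i.+2 =
    fil6_coord a 0 * fil6_coord b i.+1 - fil6_coord b 0 * fil6_coord a i.+1.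
Proof. by fil6_case a; fil6_case b; case: i => [|[|[|[|]]]]. Qed.

Lemma fil6_coord_out a i : (5 < i)%N -> fil6_coord a i = 0.
Proof. by fil6_case a => /= lt5i; rewrite nth_default // ltnW. Qed.

Definition fil6_vanish_below (n : nat) (a : fil6) :=
  forall i, (i < n)%N -> fil6_coord a i = 0.

Lemma fil6_vanish_below6 a : fil6_vanish_below 6 a -> a = 0.
Proof.
fil6_case a => a_low.
move: (a_low 0 isT) (a_low 1 isT) (a_low 2 isT) (a_low 3 isT) (a_low 4 isT).
by move: (a_low 5 isT) => /= -> -> -> -> -> ->.
Qed.

Lemma fil6_bracket_vanish_below a b n : (0 < n)%N ->
  fil6_vanish_below n b -> fil6_vanish_below n.+1 (fil6_bracket a b).
Proof.
move=> n_gt0 b_low [|[|i]] lt_i; try exact: fil6_coord_bracket_low.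
have [i_lt4 | i_ge4] := ltnP i 4; last by rewrite fil6_coord_out.
by rewrite fil6_coord_bracket // !b_low // mul0r mulr0 subr0.
Qed.

Lemma filiform6_nilpotent c : (5 <= c)%N -> nilpotent_class_le c filiform6.
Proof.
have rbracket_low k (x : nat -> filiform6) :
    fil6_vanish_below k.+2 (rbracket filiform6 k.+1 x).
  elim: k x => [|k IHk] x; first exact: fil6_coord_bracket_low.
  exact: fil6_bracket_vanish_below (IHk _).
case: c => [//|c] le5c x; apply: fil6_vanish_below6 => i lt_i6.
by apply: rbracket_low; apply: leq_trans lt_i6 _.
Qed.

Lemma fil6_coord_ad4 a b :
  fil6_coord (iter 4 (fil6_bracket a) b) 5 =
    fil6_coord a 0 ^+ 3 * fil6_coord (fil6_bracket a b) 2.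
Proof. by fil6_case a; fil6_case b; rewrite /=; ring. Qed.

End FiliformModel.

Theorem corollary5p13 :
  forall (c g : nat), (5 <= c)%N -> (2 <= g)%N ->
  forall (L : lieAlgebra CC) (x : 'I_g -> L),
    is_free_nilpotent c g L x ->
    ~ (exists P : L -> L, prederivation P /\ periodic P).
Proof.
move=> c g le5c le2g L x [_ L_free] [P [P_pre P_per]].
pose x0 : 'I_g := Ordinal (ltnW le2g); pose x1 : 'I_g := Ordinal le2g.
pose y (i : 'I_g) : filiform6 CC :=
  if val i == 0%N then (1, 0, 0, 0, 0, 0) else
  if val i == 1%N then (0, 1, 0, 0, 0, 0) else 0.
have [f [[f_linear f_bracket] fx _]] := L_free _ y (filiform6_nilpotent le5c).
pose l0 (v : L) : CC^o := fil6_coord (f v) 0.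
have l0_linear : linear l0 by exact (linear_comp_fun f_linear (fil6_coord_linear 0)).
have l0x0 : l0 (x x0) != 0 by rewrite /l0 fx oner_neq0.
have [u [z [Pu l0u]]] := periodic_eigenvector_outside_ker P_pre.1 P_per l0_linear l0x0.
pose D (v : L) : CC^o := fil6_coord (f (lie_bracket L u v)) 2.
have D_linear : linear D.
  exact (linear_comp_fun (@lie_linear_r _ L u)
    (linear_comp_fun f_linear (fil6_coord_linear 2))).
have Dx1 : D (x x1) != 0.
  by rewrite /D f_bracket fx fil6_coord_bracket //= mulr1 mul0r subr0.
have [v [e [Pv Dv]]] := periodic_eigenvector_outside_ker P_pre.1 P_per D_linear Dx1.
have ad4_eq0 := periodic_prederivation_eigen_ad4_eq0 P_pre P_per Pu Pv.
have f_ad4 : f (iter 4 (lie_bracket L u) v) = iter 4 (fil6_bracket (f u)) (f v).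
  by rewrite /= !f_bracket.
have := mulf_neq0 (expf_neq0 3 l0u) Dv.
by rewrite /l0 /D f_bracket -fil6_coord_ad4 -f_ad4 ad4_eq0 (linear_fun0 f_linear) eqxx.
Qed.
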